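(* Consider the coupled jump dynamics on the state space $S$ described below. For every state $(\underline x,I,\underline y,J,N)\in S$ and every one of the four types of jumps, the state $(\underline x',I',\underline y',J',N')$ after the jump belongs to $S$, and $I'\setminus I'_=\subseteq I\setminus I_=$. Moreover, in a death event, for every $i\in I\cap I'$ one has $|x'_i-y'_i|\le|x_i-y_i|$.
   Context: Fix $j>0$, $\varepsilon>0$ with $\varepsilon^{-1}\in\mathbb N$, $\Lambda_\varepsilon=\{0,\dots,\varepsilon^{-1}\}$, and integers $n>0$, $m\ge0$. A labeled configuration is a pair $(\underline x,I)$ with $I\subset\mathbb N$ finite and $\underline x=(x_i)_{i\in I}$, $x_i\in\Lambda_\varepsilon$. The state space $S$ consists of all $(\underline x,I,\underline y,J,N)$ with $(\underline x,I),(\underline y,J)$ labeled configurations, $I\subset J$, $|J\setminus I|\le m$, $N=\max J$. Let $I_==\{i\in I:x_i=y_i\}$. Jumps from $(\underline x,I,\underline y,J,N)$: (1) Single random-walk jumps: for each $i\in I\setminus I_=$ and each sign $\pm$, at rate $1/2$, $x_i\to x_i\pm1$ (suppressed if $x_i\pm1\notin\Lambda_\varepsilon$), everything else unchanged; for each $i\in J\setminus I_=$ and each sign, at rate $1/2$, $y_i\to y_i\pm1$ (suppressed if outside $\Lambda_\varepsilon$), everything else unchanged. (2) Double random-walk jumps: for each $i\in I_=$ and each sign, at rate $1/2$, both $x_i$ and $y_i$ move to $x_i\pm1$ (suppressed if outside $\Lambda_\varepsilon$). (3) Creation: at rate $\varepsilon j$, $N'=N+1$, $I'=I\cup\{N+1\}$,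 $J'=J\cup\{N+1\}$, $x'_{N+1}=y'_{N+1}=0$, other positions unchanged. (4) Death: at rate $\varepsilon j$, $N$ unchanged; let $i$ be the largest label among the particles of $\underline x$ at the rightmost occupied site of $\underline x$, and $k$ the largest label among the particles of $\underline y$ at the rightmost occupied site of $\underline y$; remove label $i$ from $\underline x$ (and from $I$) and label $k$ from $\underline y$ (and from $J$). If $k\notin I$ or $i=k$, stop. If $i\ne k$ and $k\in I$: if $x_k\le y_i$, the $\underline y$-particle labeled $i$ is relabeled $k$ (so label $i$ disappears from both $I$ and $J$); if $y_i<x_k$, the $\underline x$-particle labeled $k$ is relabeled $i$ (so label $k$ disappears from both $I$ and $J$).
   Formalization: In the state space S, the condition $N=\max J$ is replaced by the weaker condition that every label in J is at most N, both before and after the jump. The statement above fails without it. *)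

From HB Require Import structures.
From mathcomp Require Import all_boot finmap.
Set Implicit Arguments. Unset Strict Implicit. Unset Printing Implicit Defensive.
Local Open Scope fset_scope.

(* Positions live in Lambda_eps = {0, ..., L} with L = eps^{-1}.
   A labeled configuration (x, I): I : {fset nat} finite label set,
   x : nat -> nat giving the position of particle i for i \in I
   (values outside I are irrelevant). *)
Record state := State {
  sx : nat -> nat;
  sI : {fset nat};
  sy : nat -> nat;
  sJ : {fset nat};
  sN : nat }.

Definition upd (f : nat -> nat) (i v : nat) : nat -> nat :=
  fun l => if l == i then v else f l.

Definition distn (a b : nat) : nat := (a - b) + (b - a).

Definition Ieq (s : state) : {fset nat} :=
  [fset i in sI s | sx s i == sy s i].

(* membership in the state space S (parameters L = eps^{-1}, m);
   N is the label counter: every label in J is <= N. *)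
Definition inS (L m : nat) (s : state) : Prop :=
  [/\ forall i, i \in sI s -> sx s i <= L,
      forall i, i \in sJ s -> sy s i <= L,
      sI s `<=` sJ s,
      #|` sJ s `\` sI s| <= m
    & forall i, i \in sJ s -> i <= sN s].

Inductive jump_kind := SingleRW | DoubleRW | Creation | Death.

Definition rightmost_label (x : nat -> nat) (I : {fset nat}) (i : nat) : Prop :=
  [/\ i \in I, (forall l, l \in I -> x l <= x i)
    & (forall l, l \in I -> x l = x i -> l <= i)].

Inductive jump (L : nat) : jump_kind -> state -> state -> Prop :=
  | jx_plus x I y J N i : i \in I -> i \notin Ieq (State x I y J N) ->
      (x i).+1 <= L ->
      jump L SingleRW (State x I y J N) (State (upd x i (x i).+1) I y J N)
  | jx_minus x I y J N i : i \in I -> i \notin Ieq (State x I y J N) ->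
      0 < x i ->
      jump L SingleRW (State x I y J N) (State (upd x i (x i).-1) I y J N)
  | jy_plus x I y J N i : i \in J -> i \notin Ieq (State x I y J N) ->
      (y i).+1 <= L ->
      jump L SingleRW (State x I y J N) (State x I (upd y i (y i).+1) J N)
  | jy_minus x I y J N i : i \in J -> i \notin Ieq (State x I y J N) ->
      0 < y i ->
      jump L SingleRW (State x I y J N) (State x I (upd y i (y i).-1) J N)
  | jxy_plus x I y J N i : i \in Ieq (State x I y J N) ->
      (x i).+1 <= L ->
      jump L DoubleRW (State x I y J N)
        (State (upd x i (x i).+1) I (upd y i (x i).+1) J N)
  | jxy_minus x I y J N i : i \in Ieq (State x I y J N) ->
      0 < x i ->
      jump L DoubleRW (State x I y J N)
        (State (upd x i (x i).-1) I (upd y i (x i).-1) J N)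
  | jcreate x I y J N :
      jump L Creation (State x I y J N)
        (State (upd x N.+1 0) (I `|` [fset N.+1])
               (upd y N.+1 0) (J `|` [fset N.+1]) N.+1)
  | jdeath_plain x I y J N i k :
      rightmost_label x I i -> rightmost_label y J k ->
      (k \notin I \/ i = k) ->
      jump L Death (State x I y J N) (State x (I `\ i) y (J `\ k) N)
  | jdeath_relabel_y x I y J N i k :
      rightmost_label x I i -> rightmost_label y J k ->
      i <> k -> k \in I -> x k <= y i ->
      (* y-particle labeled i is relabeled k *)
      jump L Death (State x I y J N)
        (State x (I `\ i) (upd y k (y i)) (((J `\ k) `\ i) `|` [fset k]) N)
  | jdeath_relabel_x x I y J N i k :
      rightmost_label x I i -> rightmost_label y J k ->
      i <> k -> k \in I -> y i < x k ->
      (* x-particle labeled k is relabeled i *)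
      jump L Death (State x I y J N)
        (State (upd x i (x k)) (((I `\ i) `\ k) `|` [fset i]) y (J `\ k) N).

From HB Require Import structures.
From mathcomp Require Import all_boot finmap zify.
Set Implicit Arguments.
Unset Strict Implicit.
Local Open Scope fset_scope.

(* A single random-walk jump only moves a particle whose label is not in I_=,
   and a double jump keeps x_i = y_i, so no label enters I \ I_=; creation adds
   the fresh label N+1 with x = y = 0.  In a death event #|J \ I| cannot grow,
   since the removed y-label is either outside I or the removed x-label itself.
   The one relabelled particle lands between its partner and its old position,
   x_k <= y_i <= y_k, resp. y_i < x_k <= x_i, because i and k are rightmost:
   hence its label was already outside I_= if it is now, and its distance to
   its partner does not increase. *)

Definition mobile (s : state) : {fset nat} := sI s `\` Ieq s.

Lemma in_Ieq s l : (l \in Ieq s) = (l \in sI s) && (sx s l == sy s l).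
Proof. by rewrite /Ieq !inE. Qed.

Lemma in_mobile s l : (l \in mobile s) = (l \in sI s) && (sx s l != sy s l).
Proof. by rewrite /mobile in_fsetD in_Ieq negb_and andb_orl andNb andbC. Qed.

Lemma mobile_subset s s' :
  (forall l, l \in sI s' -> sx s' l != sy s' l ->
     (l \in sI s) && (sx s l != sy s l)) ->
  mobile s' `<=` mobile s.
Proof. by move=> h; apply/fsubsetP => l; rewrite !in_mobile => /andP[]; apply: h. Qed.

Lemma mobile_fsubset x y I I' J J' N N' : I' `<=` I ->
  mobile (State x I' y J' N') `<=` mobile (State x I y J N).
Proof. by move=> sub; apply: mobile_subset => l /(fsubsetP sub) /= -> ->. Qed.

Lemma inS_sx_bound L m s l : inS L m s -> l \in sI s -> sx s l <= L.
Proof. by case=> hx *; apply: hx. Qed.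

Lemma inS_sy_bound L m s l : inS L m s -> l \in sJ s -> sy s l <= L.
Proof. by case=> _ hy *; apply: hy. Qed.

Lemma distnC a b : distn a b = distn b a.
Proof. by rewrite /distn addnC. Qed.

Lemma distn_between a b c : a <= b <= c -> distn a b <= distn a c.
Proof. rewrite /distn; lia. Qed.

Section RandomWalk.

Variables (L m N i v : nat) (x y : nat -> nat) (I J : {fset nat}).

Lemma inS_upd_sx : v <= L ->
  inS L m (State x I y J N) -> inS L m (State (upd x i v) I y J N).
Proof. by move=> hv [hx *]; split=> //= l /hx; rewrite /upd; case: ifP. Qed.

Lemma inS_upd_sy : v <= L ->
  inS L m (State x I y J N) -> inS L m (State x I (upd y i v) J N).
Proof. by move=> hv [hx hy *]; split=> //= l /hy; rewrite /upd; case: ifP. Qed.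

Lemma mobile_upd_sx : i \notin Ieq (State x I y J N) ->
  mobile (State (upd x i v) I y J N) `<=` mobile (State x I y J N).
Proof.
rewrite in_Ieq /= => hi; apply: mobile_subset => l /=; rewrite /upd.
by case: ifP => [/eqP -> hiI _ | _ -> ->] //; move: hi; rewrite hiI.
Qed.

Lemma mobile_upd_sy : i \notin Ieq (State x I y J N) ->
  mobile (State x I (upd y i v) J N) `<=` mobile (State x I y J N).
Proof.
rewrite in_Ieq /= => hi; apply: mobile_subset => l /=; rewrite /upd.
by case: ifP => [/eqP -> hiI _ | _ -> ->] //; move: hi; rewrite hiI.
Qed.

Lemma mobile_upd_sxy :
  mobile (State (upd x i v) I (upd y i v) J N) `<=` mobile (State x I y J N).
Proof.
by apply: mobile_subset => l /= ->; rewrite /upd; case: ifP; rewrite ?eqxx.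
Qed.

End RandomWalk.

Section Creation.

Variables (L m N : nat) (x y : nat -> nat) (I J : {fset nat}).

Lemma inS_create : inS L m (State x I y J N) ->
  inS L m (State (upd x N.+1 0) (I `|` [fset N.+1])
                 (upd y N.+1 0) (J `|` [fset N.+1]) N.+1).
Proof.
move=> [/= hx hy hIJ hc hN]; split=> /= [l|l|||l].
- by rewrite /upd !inE; case: ifP => // _; rewrite orbF => /hx.
- by rewrite /upd !inE; case: ifP => // _; rewrite orbF => /hy.
- exact: fsetSU.
- apply: leq_trans hc; apply/fsubset_leq_card/fsubsetP => l.
  by rewrite !inE; case: (l == N.+1); rewrite ?orbT ?orbF.
- by rewrite !inE => /orP[/hN/leqW | /eqP->].
Qed.

Lemma mobile_create :
  mobile (State (upd x N.+1 0) (I `|` [fset N.+1])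
                (upd y N.+1 0) (J `|` [fset N.+1]) N.+1)
  `<=` mobile (State x I y J N).
Proof.
apply: mobile_subset => l /=; rewrite /upd !inE.
by case: ifP => [_ _|_ /orP[->|//]]; rewrite ?eqxx.
Qed.

End Creation.

Lemma card_fsetD1_fsetD1 (T : choiceType) (A B : {fset T}) a b :
  a \in A `\` B \/ a = b -> #|` (A `\ a) `\` (B `\ b)| <= #|` A `\` B|.
Proof.
case=> [hab|<-]; last first.
  by apply/fsubset_leq_card/fsubsetP => l; rewrite !inE; case: (l == a).
rewrite [X in _ <= X](cardfsD1 a) hab add1n.
apply: leq_trans (_ : #|` b |` ((A `\` B) `\ a)| <= _); last first.
  by rewrite cardfsU1; case: (b \notin _).
apply/fsubset_leq_card/fsubsetP => l; rewrite !inE.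
by case: (l == b); case: (l == a); case: (l \in B).
Qed.

Section Death.

Variables (L m N i k : nat) (x y : nat -> nat) (I J : {fset nat}).
Hypotheses (hi : rightmost_label x I i) (hk : rightmost_label y J k).

Lemma inS_death_plain : k \notin I \/ i = k ->
  inS L m (State x I y J N) -> inS L m (State x (I `\ i) y (J `\ k) N).
Proof.
case: hk => hkJ _ _ hor [/= hx hy hIJ hc hN].
split=> /= [l /fsetD1P[_ /hx] | l /fsetD1P[_ /hy] | | | l /fsetD1P[_ /hN]] //.
- apply/fsubsetP => l /fsetD1P[hli hlI]; apply/fsetD1P.
  split; last exact: (fsubsetP hIJ).
  by case: hor => [hkI|<-] //; apply: contraNneq hkI => <-.
- apply: leq_trans hc; apply: card_fsetD1_fsetD1.
  by case: hor => [hkI|]; [left; rewrite inE hkI | right].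
Qed.

Lemma death_relabel_y_order : x k <= y i -> I `<=` J -> x k <= y i <= y k.
Proof.
case: hi hk => hiI _ _ [_ hymax _] hxy hIJ.
by rewrite hxy hymax // (fsubsetP hIJ).
Qed.

Lemma inS_death_relabel_y : i <> k -> k \in I ->
  inS L m (State x I y J N) ->
  inS L m (State x (I `\ i) (upd y k (y i)) (((J `\ k) `\ i) `|` [fset k]) N).
Proof.
case: hi hk => hiI _ _ [hkJ _ _] hik hkI [/= hx hy hIJ hc hN].
split=> /= [l /fsetD1P[_ /hx] // | l | | | l].
- rewrite /upd !inE; case: ifP => [_ _|_]; first exact/hy/(fsubsetP hIJ).
  by rewrite orbF => /and3P[_ _ /hy].
- apply/fsubsetP => l /fsetD1P[hli hlI]; rewrite !inE hli (fsubsetP hIJ) //.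
  by case: (l == k); rewrite ?orbT.
- apply: leq_trans hc; apply/fsubset_leq_card/fsubsetP => l; rewrite !inE.
  have [->|_] := eqVneq l k; last by rewrite orbF; case: (l == i).
  by rewrite hkI eq_sym (introF eqP hik).
- by rewrite !inE => /orP[/and3P[_ _ /hN] | /eqP->]; last exact: hN.
Qed.

Lemma mobile_death_relabel_y : x k <= y i -> inS L m (State x I y J N) ->
  mobile (State x (I `\ i) (upd y k (y i)) (((J `\ k) `\ i) `|` [fset k]) N)
  `<=` mobile (State x I y J N).
Proof.
move=> hxy [_ _ hIJ _ _]; have /andP[xk_yi yi_yk] := death_relabel_y_order hxy hIJ.
apply: mobile_subset => l /fsetD1P[_ hlI] /=; rewrite /upd hlI.
case: ifP => [/eqP-> | //]; apply: contra => /eqP xk_yk.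
by rewrite eqn_leq xk_yi xk_yk.
Qed.

Lemma distn_death_relabel_y : x k <= y i -> inS L m (State x I y J N) ->
  forall l, distn (x l) (upd y k (y i) l) <= distn (x l) (y l).
Proof.
move=> hxy [_ _ hIJ _ _] l; rewrite /upd; case: ifP => [/eqP-> |//].
exact/distn_between/death_relabel_y_order.
Qed.

Lemma death_relabel_x_order : y i < x k -> k \in I -> y i < x k <= x i.
Proof. by case: hi => _ hxmax _ hyx hkI; rewrite hyx hxmax. Qed.

Lemma inS_death_relabel_x : i <> k -> k \in I ->
  inS L m (State x I y J N) ->
  inS L m (State (upd x i (x k)) (((I `\ i) `\ k) `|` [fset i]) y (J `\ k) N).
Proof.
case: hi => hiI _ _ hik hkI [/= hx hy hIJ hc hN].
split=> /= [l | l /fsetD1P[_ /hy] // | | | l /fsetD1P[_ /hN] //].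
- rewrite /upd !inE; case: ifP => [_ _|_]; first exact: hx.
  by rewrite orbF => /and3P[_ _ /hx].
- apply/fsubsetP => l; rewrite !inE.
  have [->|_] := eqVneq l i; last by rewrite orbF => /and3P[-> _ /(fsubsetP hIJ)].
  by rewrite (introF eqP hik) (fsubsetP hIJ).
- apply: leq_trans hc; apply/fsubset_leq_card/fsubsetP => l; rewrite !inE.
  by case: (l == i); case: (l == k); rewrite ?orbT ?orbF.
Qed.

Lemma mobile_death_relabel_x : y i < x k -> k \in I ->
  mobile (State (upd x i (x k)) (((I `\ i) `\ k) `|` [fset i]) y (J `\ k) N)
  `<=` mobile (State x I y J N).
Proof.
case: hi => hiI _ _ hyx hkI; have /andP[yi_xk xk_xi] := death_relabel_x_order hyx hkI.
apply: mobile_subset => l /=; rewrite /upd !inE.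
case: ifP => [/eqP-> _ _ | _]; last by rewrite orbF => /and3P[_ _ ->].
by rewrite hiI gtn_eqF // (leq_trans yi_xk).
Qed.

Lemma distn_death_relabel_x : y i < x k -> k \in I ->
  forall l, distn (upd x i (x k) l) (y l) <= distn (x l) (y l).
Proof.
move=> hyx hkI l; rewrite /upd; case: ifP => [/eqP-> |//].
have /andP[/ltnW yi_xk xk_xi] := death_relabel_x_order hyx hkI.
by rewrite distnC [X in _ <= X]distnC; apply/distn_between/andP.
Qed.

End Death.

Lemma jump_inS L m kind s s' : jump L kind s s' -> inS L m s -> inS L m s'.
Proof.
case=> [x I y J N i _ _ hv | x I y J N i hiI _ _ | x I y J N i _ _ hv
      | x I y J N i hiJ _ _ | x I y J N i _ hv | x I y J N i hi _ | x I y J N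
      | x I y J N i k hri hrk hor | x I y J N i k hri hrk hik hkI _
      | x I y J N i k hri hrk hik hkI _] hS.
- exact: inS_upd_sx.
- have hv : (x i).-1 <= L by apply/(leq_trans (leq_pred _))/(inS_sx_bound hS).
  exact: inS_upd_sx.
- exact: inS_upd_sy.
- have hv : (y i).-1 <= L by apply/(leq_trans (leq_pred _))/(inS_sy_bound hS).
  exact: inS_upd_sy.
- exact/inS_upd_sy/inS_upd_sx.
- move: hi; rewrite in_Ieq => /andP[hiI _].
  have hv : (x i).-1 <= L by apply/(leq_trans (leq_pred _))/(inS_sx_bound hS).
  exact/inS_upd_sy/inS_upd_sx.
- exact: inS_create.
- exact: inS_death_plain.
- exact: inS_death_relabel_y.
- exact: inS_death_relabel_x.
Qed.

Lemma jump_mobile L m kind s s' :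
  jump L kind s s' -> inS L m s -> mobile s' `<=` mobile s.
Proof.
case=> [x I y J N i _ hi _ | x I y J N i _ hi _ | x I y J N i _ hi _
      | x I y J N i _ hi _ | x I y J N i _ _ | x I y J N i _ _ | x I y J N
      | x I y J N i k _ _ _ | x I y J N i k hri hrk _ _ hxy
      | x I y J N i k hri hrk _ hkI hyx] hS.
- exact: mobile_upd_sx.
- exact: mobile_upd_sx.
- exact: mobile_upd_sy.
- exact: mobile_upd_sy.
- exact: mobile_upd_sxy.
- exact: mobile_upd_sxy.
- exact: mobile_create.
- exact/mobile_fsubset/fsubsetDl.
- exact: mobile_death_relabel_y hri hrk hxy hS.
- exact: mobile_death_relabel_x.
Qed.

Lemma jump_death_distn L m kind s s' : jump L kind s s' -> kind = Death ->
  inS L m s -> forall l, distn (sx s' l) (sy s' l) <= distn (sx s l) (sy s l).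
Proof.
case=> // [x I y J N i k hri hrk _ _ hxy | x I y J N i k hri _ _ hkI hyx] _ hS l.
- exact: distn_death_relabel_y hri hrk hxy hS l.
- exact: distn_death_relabel_x hri hyx hkI l.
Qed.

Theorem lemma4p2 (L m : nat) (hL : 0 < L) (kind : jump_kind) (s s' : state) :
  inS L m s -> jump L kind s s' ->
  [/\ inS L m s',
      sI s' `\` Ieq s' `<=` sI s `\` Ieq s
    & kind = Death ->
      forall i, i \in sI s `&` sI s' ->
        distn (sx s' i) (sy s' i) <= distn (sx s i) (sy s i)].
Proof.
move=> hS hj; split; first exact: jump_inS hj hS.
- exact: jump_mobile hj hS.
- by move=> hdeath i _; apply: jump_death_distn hj hdeath hS i.
Qed.
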